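(* Let $\gamma$ be a locally $K$-Lipschitz-graphical Jordan curve with continuous periodic parametrisation $\gamma:\mathbb{R}\to\mathbb{C}$ and local $K$-Lipschitz-graphical constant $\mu_K$. Let $\varphi:\mathbb{R}\to\mathbb{R}_{\ge0}$ be smooth, supported in $[-1,1]$, with $\int_{\mathbb{R}}\varphi=1$, and $\gamma_\varepsilon(s)=\int_{\mathbb{R}}\frac1\varepsilon\varphi(u/\varepsilon)\gamma(s-u)\,du$. Then for sufficiently small $\varepsilon>0$, $\gamma_\varepsilon$ is a locally $K$-Lipschitz-graphical Jordan curve, and, letting $\mu_{K,\varepsilon}$ be the local $K$-Lipschitz-graphical constant of $\gamma_\varepsilon$, we have $\liminf_{\varepsilon\to0}\mu_{K,\varepsilon}\ge\mu_K$.
   Context: Locally monotone: a Jordan curve with periodic parametrisation $\gamma$ is locally monotone if for every $\theta$ there are an open interval $U_\theta=(\theta_1,\theta_2)\ni\theta$ and a unit vector $v_\theta$ with $g_{v_\theta}(s)=\gamma(s)\cdot v_\theta$ strictly monotone on $U_\theta$. Let $f_{v_\theta}(s)=\gamma(s)\cdot n_\theta$ with $n_\theta$ a unit vector perpendicular to $v_\theta$. $\gamma$ is locally $K$-Lipschitz-graphical if for every $\theta$ there is such a pair $(v_\theta,U_\theta)$ for which moreover $f_{v_\theta}\circ g_{v_\theta}^{-1}$ is $K$-Lipschitz on $g_{v_\theta}(U_\theta)$. For a pair put $\mu(\theta,v_\theta,U_\theta)=\min\{|g_{v_\theta}(\theta)-g_{v_\theta}(\theta_1)|,|g_{v_\theta}(\theta)-g_{v_\theta}(\theta_2)|\}$;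 let $\mu_K(\theta)$ be the maximal (supremal) value of this over all pairs satisfying the $K$-Lipschitz condition, and the local $K$-Lipschitz-graphical constant is $\mu_K=\min_\theta\mu_K(\theta)$ (infimum). *)

From Stdlib Require Import Reals ZArith.
From Coquelicot Require Import Coquelicot.
Open Scope R_scope.

(* The plane C is modelled as R*R. *)
Definition dot (p q : R * R) : R := fst p * fst q + snd p * snd q.
Definition unit_vector (v : R * R) : Prop := fst v ^ 2 + snd v ^ 2 = 1.
Definition perp (v : R * R) : R * R := (- snd v, fst v).

Definition jordan_curve (gamma : R -> R * R) : Prop :=
  continuity (fun s => fst (gamma s)) /\ continuity (fun s => snd (gamma s)) /\
  exists T : R, 0 < T /\ (forall s, gamma (s + T) = gamma s) /\
    (forall s t, gamma s = gamma t -> exists k : Z, t - s = IZR k * T).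

Definition g_v (gamma : R -> R * R) (v : R * R) (s : R) : R := dot (gamma s) v.
Definition f_v (gamma : R -> R * R) (v : R * R) (s : R) : R := dot (gamma s) (perp v).

Definition strictly_monotone_on (g : R -> R) (a b : R) : Prop :=
  (forall s t, a < s -> s < t -> t < b -> g s < g t) \/
  (forall s t, a < s -> s < t -> t < b -> g t < g s).

(* (v, (a,b)) is an admissible pair at theta for the K-Lipschitz-graphical
   condition: v unit, theta in (a,b), g_v strictly monotone on (a,b), and
   f_v o g_v^{-1} is K-Lipschitz on g_v((a,b)).  Since g_v is injective on
   (a,b), the latter literally unfolds to the pointwise inequality below
   (x = g_v s, y = g_v t). *)
Definition KLG_pair (gamma : R -> R * R) (K theta : R) (v : R * R) (a b : R)
  : Prop :=
  unit_vector v /\ a < theta < b /\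
  strictly_monotone_on (g_v gamma v) a b /\
  (forall s t, a < s < b -> a < t < b ->
     Rabs (f_v gamma v s - f_v gamma v t) <= K * Rabs (g_v gamma v s - g_v gamma v t)).

Definition locally_KLG (gamma : R -> R * R) (K : R) : Prop :=
  forall theta, exists v a b, KLG_pair gamma K theta v a b.

Definition mu_pair (gamma : R -> R * R) (theta : R) (v : R * R) (a b : R) : R :=
  Rmin (Rabs (g_v gamma v theta - g_v gamma v a))
       (Rabs (g_v gamma v theta - g_v gamma v b)).

Definition muK_at (gamma : R -> R * R) (K theta : R) : Rbar :=
  Lub_Rbar (fun m => exists v a b, KLG_pair gamma K theta v a b /\
                                   m = mu_pair gamma theta v a b).

Definition Rbar_inf_over (P : R -> Prop) (F : R -> Rbar) : Rbar :=
  Glb_Rbar (fun m => exists i, P i /\ Rbar_le (F i) (Finite m)).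
Definition Rbar_sup_over (P : R -> Prop) (F : R -> Rbar) : Rbar :=
  Lub_Rbar (fun m => exists i, P i /\ Rbar_le (Finite m) (F i)).

Definition muK (gamma : R -> R * R) (K : R) : Rbar :=
  Rbar_inf_over (fun _ => True) (muK_at gamma K).

Definition liminf_0plus (F : R -> Rbar) : Rbar :=
  Rbar_sup_over (fun delta => 0 < delta)
    (fun delta => Rbar_inf_over (fun eps => 0 < eps < delta) F).

Definition smooth (phi : R -> R) : Prop :=
  forall (n : nat) (x : R), ex_derive (Derive_n phi n) x.

Definition gamma_eps (phi : R -> R) (gamma : R -> R * R) (eps : R) (s : R)
  : R * R :=
  (RInt_gen (fun u => / eps * phi (u / eps) * fst (gamma (s - u)))
            (Rbar_locally m_infty) (Rbar_locally p_infty),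
   RInt_gen (fun u => / eps * phi (u / eps) * snd (gamma (s - u)))
            (Rbar_locally m_infty) (Rbar_locally p_infty)).

(* Mollification replaces gamma(s) by a phi-weighted mean of gamma over [s - eps, s + eps];
   as phi >= 0 has mass 1, such means preserve pointwise inequalities, strict ones included.
   Hence an admissible pair (v, (a, b)) for gamma at theta gives the admissible pair
   (v, (a + eps, b - eps)) for gamma_eps: g_v stays strictly monotone, and the K-Lipschitz
   bound of f_v against g_v survives averaging because over the window all increments of g_v
   have one sign.  Compactness and periodicity give admissible intervals with a uniform
   margin L around theta, so gamma_eps is locally K-Lipschitz-graphical for eps < L.
   It is injective modulo the period: parameters close modulo the period are separated by
   the monotone g_v, distant ones because gamma keeps them a positive distance apart and
   gamma_eps is uniformly close to gamma.  That uniform closeness also shows that the mu of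
   the shrunken pair is at least the original mu minus o(1), uniformly in theta, which gives
   the liminf bound. *)

From Stdlib Require Import Reals ZArith Lra Lia Classical ClassicalEpsilon.
From Coquelicot Require Import Coquelicot.
Open Scope R_scope.

Definition periodic {A : Type} (h : R -> A) (T : R) : Prop :=
  forall s, h (s + T) = h s.

Definition l1_dist (p q : R * R) : R :=
  Rabs (fst p - fst q) + Rabs (snd p - snd q).

Definition KLG_margin (gamma : R -> R * R) (K theta m : R) : Prop :=
  exists v a b, KLG_pair gamma K theta v a b /\ a + m <= theta /\ theta + m <= b.

Lemma continuity_cst (c : R) : continuity (fun _ => c).
Proof. apply continuity_const. intros x y. reflexivity. Qed.

Lemma continuity_ext f g : (forall x, f x = g x) -> continuity f -> continuity g.
Proof.
  intros H Hf x. apply continuity_pt_locally_ext with f 1; [lra|intros; apply H|apply Hf].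
Qed.

Lemma continuity_pt_of_modulus f x :
  (forall e, 0 < e -> exists d, 0 < d /\
     forall y, Rabs (y - x) < d -> Rabs (f y - f x) < e) ->
  continuity_pt f x.
Proof.
  intros H e He. destruct (H e He) as [d [Hd Hy]].
  exists d; split; [exact Hd|]. intros y [_ Hyx]. apply Hy, Hyx.
Qed.

Lemma continuity_ab_pos_lb f a b : a <= b ->
  (forall x, a <= x <= b -> continuity_pt f x) ->
  (forall x, a <= x <= b -> 0 < f x) ->
  exists m, 0 < m /\ forall x, a <= x <= b -> m <= f x.
Proof.
  intros Hab Hc Hpos.
  destruct (continuity_ab_min f a b Hab Hc) as [x0 [Hmin Hx0]].
  exists (f x0). split; [apply Hpos|]; assumption.
Qed.

Lemma rectangle_pos_lb (F : R -> R -> R) a b c d : a <= b ->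
  (forall s t, a <= s <= b -> c <= t <= d -> 0 < F s t) ->
  (forall e, 0 < e -> exists dl, 0 < dl /\ forall s s' t t',
     Rabs (s - s') < dl -> Rabs (t - t') < dl -> Rabs (F s t - F s' t') < e) ->
  exists m, 0 < m /\ forall s t, a <= s <= b -> c <= t <= d -> m <= F s t.
Proof.
  intros Hab Hpos Hmod.
  destruct (Rle_dec c d) as [Hcd|Hcd]; [|exists 1; split; [lra|intros; lra]].
  assert (Hargmin : forall s,
    {t | c <= t <= d /\ forall t', c <= t' <= d -> F s t <= F s t'}).
  { intros s. apply constructive_indefinite_description.
    destruct (continuity_ab_min (F s) c d Hcd) as [t [Hmin Ht]].
    - intros t _. apply continuity_pt_of_modulus. intros e He.
      destruct (Hmod e He) as [dl [Hdl Hst]]. exists dl. split; [exact Hdl|].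
      intros y Hy. apply Hst; [rewrite Rminus_diag, Rabs_R0|]; assumption.
    - exists t. split; assumption. }
  set (G := fun s => F s (proj1_sig (Hargmin s))).
  assert (HG : forall s, c <= proj1_sig (Hargmin s) <= d /\
                         forall t, c <= t <= d -> G s <= F s t).
  { intros s. unfold G. destruct (Hargmin s) as [t Ht]. exact Ht. }
  destruct (continuity_ab_pos_lb G a b Hab) as [m [Hm HmG]].
  - intros s _. apply continuity_pt_of_modulus. intros e He.
    destruct (Hmod e He) as [dl [Hdl Hst]]. exists dl. split; [exact Hdl|].
    intros y Hy. destruct (HG s) as [Hs Hmins]. destruct (HG y) as [Hy' Hminy].
    assert (Z : forall t, Rabs (t - t) < dl) by (intros; rewrite Rminus_diag, Rabs_R0; exact Hdl).
    assert (A1 := Hst y s _ _ Hy (Z (proj1_sig (Hargmin s)))).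
    rewrite Rabs_minus_sym in Hy.
    assert (A2 := Hst s y _ _ Hy (Z (proj1_sig (Hargmin y)))).
    assert (B1 := Hminy _ Hs). assert (B2 := Hmins _ Hy').
    apply Rabs_lt_between in A1, A2. apply Rabs_lt_between. unfold G in *. lra.
  - intros s Hs. apply Hpos; [exact Hs|apply HG].
  - exists m. split; [exact Hm|]. intros s t Hs Ht.
    apply Rle_trans with (G s); [apply HmG, Hs|apply HG, Ht].
Qed.

Lemma is_lub_gt E l r : is_lub E l -> r < l -> exists m, E m /\ r < m.
Proof.
  intros [_ Hl] Hr. apply NNPP. intros Hn.
  assert (Hub : is_upper_bound E r).
  { intros m Hm. apply Rnot_lt_le. intros Hc. apply Hn. exists m. split; assumption. }
  specialize (Hl r Hub). lra.
Qed.

Lemma periodic_comp {A B : Type} (f : A -> B) h T : periodic h T -> periodic (fun s => f (h s)) T.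
Proof. intros Hp s. simpl. rewrite Hp. reflexivity. Qed.

Lemma periodic_IZR {A : Type} (h : R -> A) T : periodic h T ->
  forall k s, h (s - IZR k * T) = h s.
Proof.
  intros Hp k. induction k as [|k IH|k IH] using Z.peano_ind; intros s.
  - f_equal. ring.
  - rewrite succ_IZR. transitivity (h (s - T)).
    + rewrite <- (IH (s - T)). f_equal. ring.
    + rewrite <- (Hp (s - T)). f_equal. ring.
  - rewrite <- Z.sub_1_r, minus_IZR. transitivity (h (s + T)); [|apply Hp].
    rewrite <- (IH (s + T)). f_equal. ring.
Qed.

Lemma period_reduce T s : 0 < T -> exists k, 0 <= s - IZR k * T < T.
Proof.
  intros HT. destruct (floor_ex (s / T)) as [k Hk]. exists k.
  assert (IZR k * T <= s / T * T < (IZR k + 1) * T).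
  { split; [apply Rmult_le_compat_r|apply Rmult_lt_compat_r]; lra. }
  replace (s / T * T) with s in H by (field; lra). lra.
Qed.

Lemma periodic_uniform_continuity h T : 0 < T -> continuity h -> periodic h T ->
  uniform_continuity h (fun _ => True).
Proof.
  intros HT Hc Hp e.
  destruct (Heine h (fun x => -1 <= x <= T + 1) (compact_P3 _ _) (fun x _ => Hc x) e)
    as [d Hd].
  exists (mkposreal _ (Rmin_pos _ _ (cond_pos d) Rlt_0_1)). simpl.
  intros s t _ _ Hst.
  destruct (period_reduce T s HT) as [k Hk].
  rewrite <- (periodic_IZR h T Hp k s), <- (periodic_IZR h T Hp k t).
  assert (Hd1 := Rmin_l d 1). assert (Hd2 := Rmin_r d 1).
  apply Rabs_lt_between in Hst.
  apply Hd; try lra. apply Rabs_lt_between. lra.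
Qed.

Lemma uniform_radius (P : R -> R -> Prop) T : 0 < T ->
  (forall x, exists m, 0 < m /\ P x m) ->
  (forall x m m', m' <= m -> P x m -> P x m') ->
  (forall x y m, Rabs (y - x) < m -> P x m -> P y (m - Rabs (y - x))) ->
  (forall x m k, P x m -> P (x + IZR k * T) m) ->
  exists L, 0 < L /\ forall x, P x L.
Proof.
  intros HT Hex Hmono Hmove Hper.
  (* the supremal radius [rho x] (capped at 1) is 1-Lipschitz, so by periodicity
     it is bounded below by its positive minimum over one period *)
  set (E := fun x m => m <= 1 /\ P x m).
  assert (Hlub : forall x, {r | is_lub (E x) r}).
  { intros x. apply completeness.
    - exists 1. intros m [Hm _]. exact Hm.
    - destruct (Hex x) as [m [_ Hm]]. exists (Rmin m 1). split; [apply Rmin_r|].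
      apply Hmono with m; [apply Rmin_l|exact Hm]. }
  set (rho := fun x => proj1_sig (Hlub x)).
  assert (Hrho : forall x, is_lub (E x) (rho x)).
  { intros x. unfold rho. destruct (Hlub x) as [r Hr]. exact Hr. }
  assert (Hrho_pos : forall x, 0 < rho x).
  { intros x. destruct (Hex x) as [m [Hm HPm]].
    apply Rlt_le_trans with (Rmin m 1); [apply Rmin_pos; lra|].
    apply (proj1 (Hrho x)). split; [apply Rmin_r|].
    apply Hmono with m; [apply Rmin_l|exact HPm]. }
  assert (Hrho_lip : forall x y, rho x <= rho y + Rabs (y - x)).
  { intros x y. apply (proj2 (Hrho x)). intros m [Hm1 Hm].
    destruct (Rlt_or_le (Rabs (y - x)) m) as [Hyx|Hyx]; [|pose proof (Hrho_pos y); lra].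
    assert (m - Rabs (y - x) <= rho y); [|lra].
    apply (proj1 (Hrho y)). split; [pose proof (Rabs_pos (y - x)); lra|].
    apply Hmove; assumption. }
  destruct (continuity_ab_pos_lb rho 0 T) as [mu [Hmu Hmin]];
    [lra| |intros; apply Hrho_pos|].
  - intros x _. apply continuity_pt_of_modulus. intros e He.
    exists e. split; [exact He|]. intros y Hy.
    assert (A1 := Hrho_lip x y). assert (A2 := Hrho_lip y x).
    rewrite Rabs_minus_sym in A2. apply Rabs_lt_between. lra.
  - exists (mu / 2). split; [lra|]. intros x.
    destruct (period_reduce T x HT) as [k Hk].
    destruct (is_lub_gt _ _ (mu / 2) (Hrho (x - IZR k * T))) as [m [[_ Hm] Hmu2]].
    { assert (mu <= rho (x - IZR k * T)) by (apply Hmin; lra). lra. }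
    replace x with (x - IZR k * T + IZR k * T) by ring.
    apply Hper, Hmono with m; [lra|exact Hm].
Qed.

Lemma Lub_Rbar_ge E (m : R) : E m -> Rbar_le m (Lub_Rbar E).
Proof. intros Hm. apply (proj1 (Lub_Rbar_correct E)), Hm. Qed.

Lemma Lub_Rbar_gt E (r : R) : Rbar_lt r (Lub_Rbar E) -> exists m, E m /\ r < m.
Proof.
  intros Hr. apply NNPP. intros Hn.
  apply (Rbar_lt_not_le _ _ Hr), (proj2 (Lub_Rbar_correct E)).
  intros m Hm. simpl. apply Rnot_lt_le. intros Hc. apply Hn. exists m. split; assumption.
Qed.

Lemma Rbar_inf_over_ge (P : R -> Prop) F (c : R) :
  (forall i, P i -> Rbar_le c (F i)) -> Rbar_le c (Rbar_inf_over P F).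
Proof.
  intros H. apply (proj2 (Glb_Rbar_correct _)). intros m [i [Hi Hm]].
  exact (Rbar_le_trans _ _ _ (H i Hi) Hm).
Qed.

Lemma Rbar_inf_over_lt (P : R -> Prop) F (r : R) i :
  Rbar_lt r (Rbar_inf_over P F) -> P i -> Rbar_lt r (F i).
Proof.
  intros Hr Hi. apply Rbar_not_le_lt. intros Hle.
  apply (Rbar_lt_not_le _ _ Hr), (proj1 (Glb_Rbar_correct _)).
  exists i. split; assumption.
Qed.

Lemma Rbar_sup_over_ge (P : R -> Prop) F (c : R) i :
  P i -> Rbar_le c (F i) -> Rbar_le c (Rbar_sup_over P F).
Proof. intros Hi Hc. apply Lub_Rbar_ge. exists i. split; assumption. Qed.

Lemma Rbar_le_of_approx (A B : Rbar) :
  (forall r eta : R, 0 < eta -> Rbar_lt r A -> Rbar_le (r - eta) B) -> Rbar_le A B.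
Proof.
  intros H. destruct A as [a| |]; destruct B as [b| |]; simpl; try tauto.
  - apply Rnot_lt_le. intros Hba.
    assert (Z := H (a - (a - b) / 4) ((a - b) / 4) ltac:(lra) ltac:(simpl; lra)).
    simpl in Z. lra.
  - exact (H (a - 1) 1 Rlt_0_1 ltac:(simpl; lra)).
  - assert (Z := H (b + 2) 1 Rlt_0_1 I). simpl in Z. lra.
  - exact (H 0 1 Rlt_0_1 I).
Qed.

Lemma ex_RInt_continuity f a b : continuity f -> ex_RInt f a b.
Proof.
  intros Hf. apply (ex_RInt_continuous (V := R_CompleteNormedModule)).
  intros z _. apply continuity_pt_filterlim, Hf.
Qed.

Lemma is_RInt_zero f a b :
  (forall x, Rmin a b < x < Rmax a b -> f x = 0) -> is_RInt f a b 0.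
Proof.
  intros Hf. apply is_RInt_ext with (fun _ => 0).
  - intros x Hx. symmetry. apply Hf, Hx.
  - assert (Hc := is_RInt_const (V := R_NormedModule) a b 0).
    rewrite (scal_zero_r (V := R_ModuleSpace)) in Hc. exact Hc.
Qed.

Lemma is_RInt_gen_compact_support f A B : A <= B ->
  (forall x, x < A -> f x = 0) -> (forall x, B < x -> f x = 0) -> ex_RInt f A B ->
  is_RInt_gen f (Rbar_locally m_infty) (Rbar_locally p_infty) (RInt f A B).
Proof.
  intros HAB HA HB Hex P HP.
  apply Filter_prod with (fun a => a < A) (fun b => B < b); [exists A; auto|exists B; auto|].
  intros a b Ha Hb. exists (RInt f A B). split; [|apply locally_singleton, HP].
  simpl. replace (RInt f A B) with (0 + (RInt f A B + 0)) by ring.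
  apply (is_RInt_Chasles f a A b); [|apply (is_RInt_Chasles f A B b)].
  - apply is_RInt_zero. intros x Hx. apply HA.
    rewrite Rmax_right in Hx by lra. lra.
  - apply (RInt_correct (V := R_CompleteNormedModule)), Hex.
  - apply is_RInt_zero. intros x Hx. apply HB.
    rewrite Rmin_left in Hx by lra. lra.
Qed.

Lemma RInt_compact_support_mass phi : continuity phi ->
  (forall x, 1 < Rabs x -> phi x = 0) ->
  is_RInt_gen phi (Rbar_locally m_infty) (Rbar_locally p_infty) 1 ->
  RInt phi (-1) 1 = 1.
Proof.
  intros Hc Hs H1.
  assert (H2 : is_RInt_gen phi (Rbar_locally m_infty) (Rbar_locally p_infty)
                 (RInt phi (-1) 1)).
  { apply is_RInt_gen_compact_support; [lra| | |apply ex_RInt_continuity, Hc];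
      intros x Hx; apply Hs; [rewrite Rabs_left|rewrite Rabs_right]; lra. }
  apply (is_RInt_gen_unique (V := R_CompleteNormedModule)) in H1, H2. congruence.
Qed.

Lemma l1_dist_sym p q : l1_dist p q = l1_dist q p.
Proof.
  unfold l1_dist. rewrite (Rabs_minus_sym (fst p)), (Rabs_minus_sym (snd p)). reflexivity.
Qed.

Lemma l1_dist_triangle p q r : l1_dist p r <= l1_dist p q + l1_dist q r.
Proof.
  unfold l1_dist.
  pose proof (Rdist_tri (fst p) (fst r) (fst q)). pose proof (Rdist_tri (snd p) (snd r) (snd q)).
  unfold Rdist in *. lra.
Qed.

Lemma l1_dist_sub_le p q p' q' :
  Rabs (l1_dist p q - l1_dist p' q') <= l1_dist p p' + l1_dist q q'.
Proof.
  pose proof (l1_dist_triangle p p' q). pose proof (l1_dist_triangle p' q' q).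
  pose proof (l1_dist_triangle p' p q'). pose proof (l1_dist_triangle p q q').
  rewrite (l1_dist_sym p' p), (l1_dist_sym q' q) in *. apply Rabs_le. lra.
Qed.

Lemma l1_dist_eq p q : l1_dist p q <= 0 -> p = q.
Proof.
  destruct p as [p1 p2], q as [q1 q2]. unfold l1_dist. simpl. intros H.
  pose proof (Rabs_pos (p1 - q1)). pose proof (Rabs_pos (p2 - q2)).
  assert (E1 : Rabs (p1 - q1) <= 0) by lra. assert (E2 : Rabs (p2 - q2) <= 0) by lra.
  apply Rabs_le_between in E1, E2. f_equal; lra.
Qed.

Lemma Rabs_dot_sub_le p q v : unit_vector v -> Rabs (dot p v - dot q v) <= l1_dist p q.
Proof.
  unfold unit_vector, dot, l1_dist. intros Hv.
  assert (H1 : Rabs (fst v) <= 1) by (apply Rabs_le; split; nra).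
  assert (H2 : Rabs (snd v) <= 1) by (apply Rabs_le; split; nra).
  replace (fst p * fst v + snd p * snd v - (fst q * fst v + snd q * snd v))
    with ((fst p - fst q) * fst v + (snd p - snd q) * snd v) by ring.
  eapply Rle_trans; [apply Rabs_triang|]. rewrite !Rabs_mult.
  pose proof (Rabs_pos (fst p - fst q)). pose proof (Rabs_pos (snd p - snd q)).
  pose proof (Rabs_pos (fst v)). pose proof (Rabs_pos (snd v)). nra.
Qed.

Lemma strictly_monotone_on_weak g a b : strictly_monotone_on g a b ->
  (forall x y, a < x -> x <= y -> y < b -> g x <= g y) \/
  (forall x y, a < x -> x <= y -> y < b -> g y <= g x).
Proof.
  intros [Hm|Hm]; [left|right]; intros x y Hx Hxy Hy;
    (destruct (Req_dec x y) as [->|Hne]; [apply Rle_refl|left; apply Hm; lra]).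
Qed.

Lemma strictly_monotone_on_inj g a b s t : strictly_monotone_on g a b ->
  a < s < b -> a < t < b -> g s = g t -> s = t.
Proof.
  intros Hm Hs Ht Hg.
  destruct (Rtotal_order s t) as [Hst|[Hst|Hst]]; [exfalso|exact Hst|exfalso];
    destruct Hm as [Hm|Hm].
  - assert (Z := Hm s t ltac:(lra) Hst ltac:(lra)). lra.
  - assert (Z := Hm s t ltac:(lra) Hst ltac:(lra)). lra.
  - assert (Z := Hm t s ltac:(lra) Hst ltac:(lra)). lra.
  - assert (Z := Hm t s ltac:(lra) Hst ltac:(lra)). lra.
Qed.

Lemma KLG_pair_shift gamma K T theta v a b k : periodic gamma T ->
  KLG_pair gamma K theta v a b ->
  KLG_pair gamma K (theta + IZR k * T) v (a + IZR k * T) (b + IZR k * T).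
Proof.
  intros Hp [Hv [Hab [Hm Hlip]]].
  assert (Eg : forall s, g_v gamma v s = g_v gamma v (s - IZR k * T)).
  { intros s. unfold g_v. rewrite (periodic_IZR gamma T Hp). reflexivity. }
  assert (Ef : forall s, f_v gamma v s = f_v gamma v (s - IZR k * T)).
  { intros s. unfold f_v. rewrite (periodic_IZR gamma T Hp). reflexivity. }
  split; [exact Hv|]. split; [lra|]. split.
  - destruct Hm as [Hm|Hm]; [left|right]; intros s t Hs Hst Ht;
      rewrite (Eg s), (Eg t); apply Hm; lra.
  - intros s t Hs Ht. rewrite (Eg s), (Eg t), (Ef s), (Ef t). apply Hlip; lra.
Qed.

Lemma mu_pair_ge0 gamma theta v a b : 0 <= mu_pair gamma theta v a b.
Proof. apply Rmin_glb; apply Rabs_pos. Qed.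

Lemma mu_pair_perturb gamma gamma' theta v a b a' b' eta :
  let g := g_v gamma v in let g' := g_v gamma' v in
  Rabs (g' theta - g theta) + Rabs (g' a' - g a) <= eta ->
  Rabs (g' theta - g theta) + Rabs (g' b' - g b) <= eta ->
  mu_pair gamma theta v a b - eta <= mu_pair gamma' theta v a' b'.
Proof.
  intros g g' Ha Hb. unfold mu_pair. fold g g'.
  assert (Hpert : forall x y x' y', Rabs (x' - x) + Rabs (y' - y) <= eta ->
                    Rabs (x - y) - eta <= Rabs (x' - y')).
  { intros x y x' y' H.
    pose proof (Rdist_tri x y x'). pose proof (Rdist_tri x' y y').
    unfold Rdist in *. rewrite (Rabs_minus_sym x x'), (Rabs_minus_sym y' y) in *. lra. }
  pose proof (Rmin_l (Rabs (g theta - g a)) (Rabs (g theta - g b))).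
  pose proof (Rmin_r (Rabs (g theta - g a)) (Rabs (g theta - g b))).
  apply Rmin_glb.
  - pose proof (Hpert _ _ _ _ Ha). lra.
  - pose proof (Hpert _ _ _ _ Hb). lra.
Qed.

Lemma muK_at_ge_pair gamma K theta v a b : KLG_pair gamma K theta v a b ->
  Rbar_le (mu_pair gamma theta v a b) (muK_at gamma K theta).
Proof. intros Hp. apply Lub_Rbar_ge. exists v, a, b. split; [exact Hp|reflexivity]. Qed.

(** * Mollification *)

Section Mollifier.
Variable phi : R -> R.
Hypothesis phi_cont : continuity phi.
Hypothesis phi_ge0 : forall x, 0 <= phi x.
Hypothesis phi_supp : forall x, 1 < Rabs x -> phi x = 0.
Hypothesis phi_mass : RInt phi (-1) 1 = 1.

Definition wmean (k : R -> R) : R := RInt (fun w => phi w * k w) (-1) 1.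

Lemma wmean_ext k1 k2 : (forall w, k1 w = k2 w) -> wmean k1 = wmean k2.
Proof. intros H. unfold wmean. apply RInt_ext. intros w _. rewrite H. reflexivity. Qed.

Lemma ex_RInt_wmean k : continuity k -> ex_RInt (fun w => phi w * k w) (-1) 1.
Proof. intros Hk. apply ex_RInt_continuity, continuity_mult; assumption. Qed.

Lemma wmean_le k1 k2 : continuity k1 -> continuity k2 ->
  (forall w, -1 <= w <= 1 -> k1 w <= k2 w) -> wmean k1 <= wmean k2.
Proof.
  intros H1 H2 Hle. apply RInt_le; [lra|apply ex_RInt_wmean; assumption..|].
  intros w Hw. apply Rmult_le_compat_l; [apply phi_ge0|apply Hle; lra].
Qed.

Lemma wmean_scal c k : continuity k -> wmean (fun w => c * k w) = c * wmean k.
Proof.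
  intros Hk. unfold wmean.
  rewrite <- (RInt_scal (V := R_CompleteNormedModule)) by (apply ex_RInt_wmean, Hk).
  apply RInt_ext. intros w _. change (phi w * (c * k w) = c * (phi w * k w)). ring.
Qed.

Lemma wmean_plus k1 k2 : continuity k1 -> continuity k2 ->
  wmean (fun w => k1 w + k2 w) = wmean k1 + wmean k2.
Proof.
  intros H1 H2. unfold wmean.
  rewrite <- (RInt_plus (V := R_CompleteNormedModule)) by (apply ex_RInt_wmean; assumption).
  apply RInt_ext. intros w _. change (phi w * (k1 w + k2 w) = phi w * k1 w + phi w * k2 w).
  ring.
Qed.

Lemma wmean_minus k1 k2 : continuity k1 -> continuity k2 ->
  wmean (fun w => k1 w - k2 w) = wmean k1 - wmean k2.
Proof.
  intros H1 H2. unfold wmean.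
  rewrite <- (RInt_minus (V := R_CompleteNormedModule)) by (apply ex_RInt_wmean; assumption).
  apply RInt_ext. intros w _. change (phi w * (k1 w - k2 w) = phi w * k1 w - phi w * k2 w).
  ring.
Qed.

Lemma wmean_const c : wmean (fun _ => c) = c.
Proof.
  unfold wmean. transitivity (RInt (fun w => scal c (phi w)) (-1) 1).
  - apply RInt_ext. intros w _. apply Rmult_comm.
  - rewrite (RInt_scal (V := R_CompleteNormedModule)), phi_mass
      by (apply ex_RInt_continuity, phi_cont).
    apply Rmult_1_r.
Qed.

Lemma wmean_lt k1 k2 : continuity k1 -> continuity k2 ->
  (forall w, -1 <= w <= 1 -> k1 w < k2 w) -> wmean k1 < wmean k2.
Proof.
  intros H1 H2 Hlt.
  assert (Hk : continuity (fun w => k2 w - k1 w)) by (apply continuity_minus; assumption).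
  destruct (continuity_ab_pos_lb (fun w => k2 w - k1 w) (-1) 1) as [m [Hm Hmk]];
    [lra|intros; apply Hk|intros w Hw; specialize (Hlt w Hw); lra|].
  assert (Hle : wmean (fun _ => m) <= wmean (fun w => k2 w - k1 w)).
  { apply wmean_le; [apply continuity_cst|exact Hk|exact Hmk]. }
  rewrite wmean_const, wmean_minus in Hle by assumption. lra.
Qed.

Lemma wmean_abs_le k c e : continuity k ->
  (forall w, -1 <= w <= 1 -> Rabs (k w - c) <= e) -> Rabs (wmean k - c) <= e.
Proof.
  intros Hk Hw.
  assert (L : wmean (fun _ => c - e) <= wmean k).
  { apply wmean_le; [apply continuity_cst|exact Hk|].
    intros w Hw'. specialize (Hw w Hw'). apply Rabs_le_between in Hw. lra. }
  assert (U : wmean k <= wmean (fun _ => c + e)).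
  { apply wmean_le; [exact Hk|apply continuity_cst|].
    intros w Hw'. specialize (Hw w Hw'). apply Rabs_le_between in Hw. lra. }
  rewrite wmean_const in L, U. apply Rabs_le_between. lra.
Qed.

Lemma wmean_Rabs_le k1 k2 K : continuity k1 -> continuity k2 ->
  (forall w, -1 <= w <= 1 -> Rabs (k1 w) <= K * k2 w) ->
  Rabs (wmean k1) <= K * wmean k2.
Proof.
  intros H1 H2 Hw.
  assert (L : wmean (fun w => - K * k2 w) <= wmean k1).
  { apply wmean_le; [apply continuity_scal, H2|exact H1|].
    intros w Hw'. specialize (Hw w Hw'). apply Rabs_le_between in Hw. lra. }
  assert (U : wmean k1 <= wmean (fun w => K * k2 w)).
  { apply wmean_le; [exact H1|apply continuity_scal, H2|].
    intros w Hw'. specialize (Hw w Hw'). apply Rabs_le_between in Hw. lra. }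
  rewrite !wmean_scal in L, U by exact H2. apply Rabs_le_between. lra.
Qed.

Definition mollify (eps : R) (h : R -> R) (s : R) : R := wmean (fun w => h (s - eps * w)).

Lemma continuity_window h eps s : continuity h -> continuity (fun w => h (s - eps * w)).
Proof.
  intros Hh. apply (continuity_comp (fun w => s - eps * w) h); [|exact Hh].
  apply continuity_minus; [apply continuity_cst|].
  apply continuity_scal, derivable_continuous, derivable_id.
Qed.

Lemma mollify_lt eps h s t : continuity h ->
  (forall w, -1 <= w <= 1 -> h (s - eps * w) < h (t - eps * w)) ->
  mollify eps h s < mollify eps h t.
Proof. intros Hh Hw. apply wmean_lt; [apply continuity_window, Hh..|exact Hw]. Qed.

Lemma mollify_sub eps h s t : continuity h ->
  mollify eps h s - mollify eps h t = wmean (fun w => h (s - eps * w) - h (t - eps * w)).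
Proof. intros Hh. symmetry. apply wmean_minus; apply continuity_window, Hh. Qed.

Lemma mollify_lin eps h1 h2 a b s : continuity h1 -> continuity h2 ->
  mollify eps (fun t => h1 t * a + h2 t * b) s = mollify eps h1 s * a + mollify eps h2 s * b.
Proof.
  intros H1 H2. unfold mollify.
  rewrite (Rmult_comm _ a), (Rmult_comm _ b), <- !wmean_scal, <- wmean_plus
    by (try apply continuity_scal; apply continuity_window; assumption).
  apply wmean_ext. intros w. ring.
Qed.

Lemma mollify_close eps h s e : continuity h -> 0 <= eps ->
  (forall u, Rabs (u - s) <= eps -> Rabs (h u - h s) <= e) ->
  Rabs (mollify eps h s - h s) <= e.
Proof.
  intros Hh He Hu. apply wmean_abs_le; [apply continuity_window, Hh|].
  intros w Hw. apply Hu. apply Rabs_le. nra.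
Qed.

Lemma mollify_uniform eps h d e : continuity h ->
  (forall s t, Rabs (s - t) < d -> Rabs (h s - h t) <= e) ->
  forall s t, Rabs (s - t) < d -> Rabs (mollify eps h s - mollify eps h t) <= e.
Proof.
  intros Hh Hd s t Hst. rewrite mollify_sub, <- (Rminus_0_r (wmean _)) by exact Hh.
  apply wmean_abs_le; [apply continuity_minus; apply continuity_window, Hh|].
  intros w _. rewrite Rminus_0_r. apply Hd.
  replace (s - eps * w - (t - eps * w)) with (s - t) by ring. exact Hst.
Qed.

Lemma continuity_mollify eps h : continuity h -> uniform_continuity h (fun _ => True) ->
  continuity (mollify eps h).
Proof.
  intros Hh Hu s. apply continuity_pt_of_modulus. intros e He.
  destruct (Hu (mkposreal (e / 2) ltac:(lra))) as [d Hd].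
  exists d. split; [apply cond_pos|]. intros t Ht.
  apply Rle_lt_trans with (e / 2); [|lra].
  apply (mollify_uniform eps h d); [exact Hh| |exact Ht].
  intros u v Huv. left. apply Hd; tauto.
Qed.

Lemma mollify_periodic eps h T : periodic h T -> periodic (mollify eps h) T.
Proof.
  intros Hp s. apply wmean_ext. intros w.
  rewrite <- (Hp (s - eps * w)). f_equal. ring.
Qed.

Lemma mollify_lipschitz eps f g K s t : continuity f -> continuity g ->
  (forall w, -1 <= w <= 1 -> 0 <= g (s - eps * w) - g (t - eps * w)) ->
  (forall w, -1 <= w <= 1 ->
     Rabs (f (s - eps * w) - f (t - eps * w)) <= K * Rabs (g (s - eps * w) - g (t - eps * w))) ->
  Rabs (mollify eps f s - mollify eps f t) <= K * Rabs (mollify eps g s - mollify eps g t).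
Proof.
  intros Hf Hg Hsign Hw. rewrite !mollify_sub by assumption.
  assert (Hcont : forall h, continuity h ->
            continuity (fun w => h (s - eps * w) - h (t - eps * w))).
  { intros h Hh. apply continuity_minus; apply continuity_window, Hh. }
  rewrite (Rabs_pos_eq (wmean (fun w => g (s - eps * w) - g (t - eps * w)))).
  - apply wmean_Rabs_le; [apply Hcont, Hf|apply Hcont, Hg|].
    intros w Hw'. rewrite <- (Rabs_pos_eq _ (Hsign w Hw')). apply Hw, Hw'.
  - apply Rle_trans with (wmean (fun _ => 0)); [rewrite wmean_const; apply Rle_refl|].
    apply wmean_le; [apply continuity_cst|apply Hcont, Hg|exact Hsign].
Qed.

Lemma RInt_gen_mollify h eps s : continuity h -> 0 < eps ->
  RInt_gen (fun u => / eps * phi (u / eps) * h (s - u))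
    (Rbar_locally m_infty) (Rbar_locally p_infty) = mollify eps h s.
Proof.
  intros Hh He.
  set (F := fun u => / eps * phi (u / eps) * h (s - u)).
  assert (HF : continuity F).
  { apply continuity_mult; [apply continuity_mult; [apply continuity_cst|]|].
    - apply (continuity_comp (fun u => u / eps) phi); [|exact phi_cont].
      apply continuity_mult; [apply derivable_continuous, derivable_id|apply continuity_cst].
    - apply (continuity_comp (fun u => s - u) h); [|exact Hh].
      apply continuity_minus; [apply continuity_cst|apply derivable_continuous, derivable_id]. }
  assert (E : RInt F (-eps) eps = mollify eps h s).
  { unfold mollify, wmean.
    replace (-eps) with (eps * -1 + 0) by ring. replace eps with (eps * 1 + 0) at 2 by ring.
    rewrite <- (RInt_comp_lin (V := R_CompleteNormedModule)) by (apply ex_RInt_continuity, HF).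
    apply RInt_ext. intros w _. unfold F.
    change (eps * (/ eps * phi ((eps * w + 0) / eps) * h (s - (eps * w + 0)))
            = phi w * h (s - eps * w)).
    replace ((eps * w + 0) / eps) with w by (field; lra).
    replace (s - (eps * w + 0)) with (s - eps * w) by ring.
    field. lra. }
  assert (Hout : forall u, eps < Rabs u -> F u = 0).
  { intros u Hu. unfold F. rewrite phi_supp; [ring|].
    unfold Rdiv. rewrite Rabs_mult, Rabs_inv, (Rabs_pos_eq eps) by lra.
    apply (Rmult_lt_reg_r eps); [exact He|].
    rewrite Rmult_assoc, Rinv_l, Rmult_1_r, Rmult_1_l by lra. exact Hu. }
  rewrite <- E. apply (is_RInt_gen_unique (V := R_CompleteNormedModule)).
  apply is_RInt_gen_compact_support; [lra| | |apply ex_RInt_continuity, HF];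
    intros u Hu; apply Hout; [rewrite Rabs_left|rewrite Rabs_right]; lra.
Qed.

End Mollifier.

(** * The mollified curve *)

Section Curve.
Variable gamma : R -> R * R.
Variable T : R.
Hypothesis gamma_fst_cont : continuity (fun s => fst (gamma s)).
Hypothesis gamma_snd_cont : continuity (fun s => snd (gamma s)).
Hypothesis T_pos : 0 < T.
Hypothesis gamma_periodic : periodic gamma T.

Lemma continuity_dot u : continuity (fun s => dot (gamma s) u).
Proof.
  unfold dot. apply continuity_plus; apply continuity_mult; assumption || apply continuity_cst.
Qed.

Lemma curve_uniform_continuity e : 0 < e ->
  exists d, 0 < d /\ forall s t, Rabs (s - t) < d -> l1_dist (gamma s) (gamma t) < e.
Proof.
  intros He.
  destruct (periodic_uniform_continuity _ T T_pos gamma_fst_cont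
              (periodic_comp fst gamma T gamma_periodic) (mkposreal (e / 2) ltac:(lra)))
    as [d1 H1].
  destruct (periodic_uniform_continuity _ T T_pos gamma_snd_cont
              (periodic_comp snd gamma T gamma_periodic) (mkposreal (e / 2) ltac:(lra)))
    as [d2 H2].
  exists (Rmin d1 d2). split; [apply Rmin_pos; apply cond_pos|].
  intros s t Hst. unfold l1_dist.
  assert (A1 := H1 s t I I (Rlt_le_trans _ _ _ Hst (Rmin_l d1 d2))).
  assert (A2 := H2 s t I I (Rlt_le_trans _ _ _ Hst (Rmin_r d1 d2))).
  simpl in A1, A2. lra.
Qed.

Lemma KLG_margin_uniform K : locally_KLG gamma K ->
  exists L, 0 < L /\ forall theta, KLG_margin gamma K theta L.
Proof.
  intros HK. apply uniform_radius with T; [exact T_pos| | | |].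
  - intros theta. destruct (HK theta) as [v [a [b Hp]]].
    pose proof Hp as [_ [Hab _]].
    exists (Rmin (theta - a) (b - theta)). split; [apply Rmin_pos; lra|].
    exists v, a, b. split; [exact Hp|].
    pose proof (Rmin_l (theta - a) (b - theta)). pose proof (Rmin_r (theta - a) (b - theta)).
    lra.
  - intros theta m m' Hm' [v [a [b [Hp [Ha Hb]]]]].
    exists v, a, b. split; [exact Hp|lra].
  - intros theta theta' m Hd [v [a [b [[Hv [Hab Hrest]] [Ha Hb]]]]].
    pose proof (Rle_abs (theta' - theta)). pose proof (Rle_abs (- (theta' - theta))).
    rewrite Rabs_Ropp in *.
    exists v, a, b. split; [split; [exact Hv|split; [lra|exact Hrest]]|lra].
  - intros theta m k [v [a [b [Hp [Ha Hb]]]]].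
    exists v, (a + IZR k * T), (b + IZR k * T).
    split; [apply KLG_pair_shift, Hp; exact gamma_periodic|lra].
Qed.

Hypothesis gamma_inj : forall s t, gamma s = gamma t -> exists k : Z, t - s = IZR k * T.

Lemma curve_separation c : 0 < c -> exists m, 0 < m /\ forall s t,
  (forall k, c <= Rabs (t - IZR k * T - s)) -> m <= l1_dist (gamma s) (gamma t).
Proof.
  intros Hc.
  destruct (rectangle_pos_lb (fun s tau => l1_dist (gamma s) (gamma (s + tau))) 0 T c (T - c))
    as [m [Hm Hmin]]; [lra| | |].
  - intros s tau Hs Htau. apply Rnot_le_lt. intros Hle.
    destruct (gamma_inj _ _ (l1_dist_eq _ _ Hle)) as [k Hk].
    assert (Hk0 : (0 < k)%Z) by (apply lt_IZR; apply (Rmult_lt_reg_r T); lra).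
    assert (Hk1 : (k < 1)%Z) by (apply lt_IZR; apply (Rmult_lt_reg_r T); lra).
    lia.
  - intros e He. destruct (curve_uniform_continuity (e / 2)) as [d [Hd Hu]]; [lra|].
    exists (d / 2). split; [lra|]. intros s s' tau tau' Hs Htau.
    assert (A1 := Hu s s' ltac:(lra)).
    assert (Hst : Rabs (s + tau - (s' + tau')) < d).
    { replace (s + tau - (s' + tau')) with (s - s' + (tau - tau')) by ring.
      pose proof (Rabs_triang (s - s') (tau - tau')). lra. }
    assert (A2 := Hu _ _ Hst).
    eapply Rle_lt_trans; [apply l1_dist_sub_le|lra].
  - exists m. split; [exact Hm|]. intros s t Hfar.
    destruct (period_reduce T s T_pos) as [j Hj].
    destruct (period_reduce T (t - (s - IZR j * T)) T_pos) as [k Hk].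
    assert (H1 := Hfar (k - j)%Z). assert (H2 := Hfar (k - j + 1)%Z).
    rewrite minus_IZR in H1. rewrite plus_IZR, minus_IZR in H2.
    rewrite Rabs_pos_eq in H1 by lra. rewrite Rabs_left in H2 by lra.
    rewrite <- (periodic_IZR gamma T gamma_periodic j s),
            <- (periodic_IZR gamma T gamma_periodic k t).
    replace (t - IZR k * T) with (s - IZR j * T + (t - IZR k * T - (s - IZR j * T))) by ring.
    apply Hmin; lra.
Qed.

Section Mollified.
Variable phi : R -> R.
Hypothesis phi_cont : continuity phi.
Hypothesis phi_ge0 : forall x, 0 <= phi x.
Hypothesis phi_supp : forall x, 1 < Rabs x -> phi x = 0.
Hypothesis phi_mass : RInt phi (-1) 1 = 1.

Lemma gamma_eps_mollify eps s : 0 < eps ->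
  gamma_eps phi gamma eps s =
    (mollify phi eps (fun t => fst (gamma t)) s, mollify phi eps (fun t => snd (gamma t)) s).
Proof.
  intros He. unfold gamma_eps.
  rewrite (RInt_gen_mollify phi phi_cont phi_supp (fun t => fst (gamma t))),
          (RInt_gen_mollify phi phi_cont phi_supp (fun t => snd (gamma t))) by assumption.
  reflexivity.
Qed.

Lemma dot_gamma_eps eps s u : 0 < eps ->
  dot (gamma_eps phi gamma eps s) u = mollify phi eps (fun t => dot (gamma t) u) s.
Proof.
  intros He. rewrite gamma_eps_mollify by exact He. unfold dot. simpl.
  symmetry. apply mollify_lin; assumption.
Qed.

Lemma continuity_gamma_eps eps : 0 < eps ->
  continuity (fun s => fst (gamma_eps phi gamma eps s)) /\
  continuity (fun s => snd (gamma_eps phi gamma eps s)).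
Proof.
  intros He. split.
  - apply (continuity_ext (mollify phi eps (fun t => fst (gamma t)))).
    { intros s. rewrite gamma_eps_mollify by exact He. reflexivity. }
    apply continuity_mollify; try assumption.
    apply (periodic_uniform_continuity _ T); [exact T_pos|exact gamma_fst_cont|].
    apply periodic_comp, gamma_periodic.
  - apply (continuity_ext (mollify phi eps (fun t => snd (gamma t)))).
    { intros s. rewrite gamma_eps_mollify by exact He. reflexivity. }
    apply continuity_mollify; try assumption.
    apply (periodic_uniform_continuity _ T); [exact T_pos|exact gamma_snd_cont|].
    apply periodic_comp, gamma_periodic.
Qed.

Lemma gamma_eps_periodic eps : 0 < eps -> periodic (gamma_eps phi gamma eps) T.
Proof.
  intros He s. rewrite !gamma_eps_mollify by exact He.
  f_equal; apply mollify_periodic, periodic_comp, gamma_periodic.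
Qed.

Lemma gamma_eps_close e : 0 < e -> exists d, 0 < d /\
  forall eps, 0 < eps < d -> forall s, l1_dist (gamma_eps phi gamma eps s) (gamma s) <= e.
Proof.
  intros He. destruct (curve_uniform_continuity (e / 2)) as [d [Hd Hu]]; [lra|].
  exists d. split; [exact Hd|]. intros eps [Heps Hed] s.
  rewrite gamma_eps_mollify by exact Heps. unfold l1_dist. simpl.
  assert (Hcomp : forall u, Rabs (u - s) <= eps ->
            Rabs (fst (gamma u) - fst (gamma s)) <= e / 2 /\
            Rabs (snd (gamma u) - snd (gamma s)) <= e / 2).
  { intros u Hus. assert (Z := Hu u s ltac:(lra)). unfold l1_dist in Z.
    pose proof (Rabs_pos (fst (gamma u) - fst (gamma s))).
    pose proof (Rabs_pos (snd (gamma u) - snd (gamma s))). lra. }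
  assert (A1 : Rabs (mollify phi eps (fun t => fst (gamma t)) s - fst (gamma s)) <= e / 2).
  { apply mollify_close; try assumption; [lra|intros u Hus; apply Hcomp, Hus]. }
  assert (A2 : Rabs (mollify phi eps (fun t => snd (gamma t)) s - snd (gamma s)) <= e / 2).
  { apply mollify_close; try assumption; [lra|intros u Hus; apply Hcomp, Hus]. }
  lra.
Qed.

Lemma KLG_pair_mollify K theta v a b eps : 0 < eps -> a + eps < theta < b - eps ->
  KLG_pair gamma K theta v a b ->
  KLG_pair (gamma_eps phi gamma eps) K theta v (a + eps) (b - eps).
Proof.
  intros He Htheta [Hv [Hab [Hm Hlip]]].
  assert (Eg : forall s, g_v (gamma_eps phi gamma eps) v s = mollify phi eps (g_v gamma v) s).
  { intros s. apply dot_gamma_eps, He. }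
  assert (Ef : forall s, f_v (gamma_eps phi gamma eps) v s = mollify phi eps (f_v gamma v) s).
  { intros s. apply dot_gamma_eps, He. }
  assert (Cg := continuity_dot v). assert (Cf := continuity_dot (perp v)).
  assert (Hwin : forall s w, a + eps < s < b - eps -> -1 <= w <= 1 -> a < s - eps * w < b).
  { intros s w Hs Hw. split; nra. }
  split; [exact Hv|]. split; [exact Htheta|]. split.
  - destruct Hm as [Hm|Hm]; [left|right]; intros s t Hs Hst Ht; rewrite !Eg;
      apply mollify_lt; try assumption; intros w Hw;
      pose proof (Hwin s w ltac:(lra) Hw); pose proof (Hwin t w ltac:(lra) Hw);
      apply Hm; lra.
  - (* by symmetry it suffices to treat s <= t; then all the increments
       g_v (s - eps w) - g_v (t - eps w) have the same sign *)
    assert (Hle : forall s t, a + eps < s < b - eps -> a + eps < t < b - eps -> s <= t ->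
      Rabs (mollify phi eps (f_v gamma v) s - mollify phi eps (f_v gamma v) t) <=
      K * Rabs (mollify phi eps (g_v gamma v) s - mollify phi eps (g_v gamma v) t)).
    { intros s t Hs Ht Hst.
      assert (Hw2 : forall w, -1 <= w <= 1 ->
                a < s - eps * w < b /\ a < t - eps * w < b /\ s - eps * w <= t - eps * w).
      { intros w Hw. split; [apply Hwin|split; [apply Hwin|]]; lra. }
      destruct (strictly_monotone_on_weak _ _ _ Hm) as [Hinc|Hdec].
      - rewrite (Rabs_minus_sym (mollify phi eps (f_v gamma v) s)),
                (Rabs_minus_sym (mollify phi eps (g_v gamma v) s)).
        apply mollify_lipschitz; try assumption;
          intros w Hw; destruct (Hw2 w Hw) as [H1 [H2 H3]].
        + assert (Z := Hinc _ _ (proj1 H1) H3 (proj2 H2)). lra.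
        + apply Hlip; assumption.
      - apply mollify_lipschitz; try assumption;
          intros w Hw; destruct (Hw2 w Hw) as [H1 [H2 H3]].
        + assert (Z := Hdec _ _ (proj1 H1) H3 (proj2 H2)). lra.
        + apply Hlip; assumption. }
    intros s t Hs Ht. rewrite !Eg, !Ef.
    destruct (Rle_or_lt s t) as [Hst|Hst]; [apply Hle; assumption|].
    rewrite (Rabs_minus_sym (mollify phi eps (f_v gamma v) s)),
            (Rabs_minus_sym (mollify phi eps (g_v gamma v) s)).
    apply Hle; [assumption|assumption|lra].
Qed.

Lemma KLG_margin_mollify K theta m eps : 0 < eps -> eps < m ->
  KLG_margin gamma K theta m -> KLG_margin (gamma_eps phi gamma eps) K theta (m - eps).
Proof.
  intros He Hm [v [a [b [Hp [Ha Hb]]]]].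
  exists v, (a + eps), (b - eps). split; [|lra].
  apply KLG_pair_mollify; [exact He|lra|exact Hp].
Qed.

Lemma gamma_eps_injective K L m eps : 0 < eps < L / 2 ->
  (forall theta, KLG_margin gamma K theta L) ->
  (forall s t, (forall k, L / 2 <= Rabs (t - IZR k * T - s)) ->
     m <= l1_dist (gamma s) (gamma t)) ->
  (forall s, l1_dist (gamma_eps phi gamma eps s) (gamma s) < m / 2) ->
  forall s t, gamma_eps phi gamma eps s = gamma_eps phi gamma eps t ->
    exists k : Z, t - s = IZR k * T.
Proof.
  intros He Hmargin Hsep Hclose s t Hst.
  destruct (classic (exists k : Z, Rabs (t - IZR k * T - s) < L / 2)) as [[k Hk]|Hfar].
  - (* t is near s modulo T: g_v of the mollified curve is strictly monotone there *)
    exists k. apply Rabs_def2 in Hk.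
    destruct (KLG_margin_mollify K s L eps ltac:(lra) ltac:(lra) (Hmargin s))
      as [v [a [b [[_ [_ [Hm _]]] [Ha Hb]]]]].
    enough (t - IZR k * T = s) by lra.
    apply (strictly_monotone_on_inj (g_v (gamma_eps phi gamma eps) v) a b);
      [exact Hm|lra|lra|].
    unfold g_v. rewrite (periodic_IZR (gamma_eps phi gamma eps) T), Hst;
      [reflexivity|apply gamma_eps_periodic; lra].
  - (* t is far from s modulo T: gamma s and gamma t are m apart, while mollification
       moves points by less than m / 2 *)
    exfalso.
    assert (Hd : m <= l1_dist (gamma s) (gamma t)).
    { apply Hsep. intros k. apply Rnot_lt_le. intros Hk. apply Hfar. exists k. exact Hk. }
    assert (E1 : l1_dist (gamma s) (gamma_eps phi gamma eps s) < m / 2).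
    { rewrite l1_dist_sym. apply Hclose. }
    assert (E2 : l1_dist (gamma_eps phi gamma eps s) (gamma t) < m / 2).
    { rewrite Hst. apply Hclose. }
    pose proof (l1_dist_triangle (gamma s) (gamma_eps phi gamma eps s) (gamma t)). lra.
Qed.

Lemma gamma_eps_jordan_KLG K L : 0 < L -> (forall theta, KLG_margin gamma K theta L) ->
  exists delta, 0 < delta /\ forall eps, 0 < eps < delta ->
    jordan_curve (gamma_eps phi gamma eps) /\ locally_KLG (gamma_eps phi gamma eps) K.
Proof.
  intros HL Hmargin.
  destruct (curve_separation (L / 2)) as [m [Hm Hsep]]; [lra|].
  destruct (gamma_eps_close (m / 4)) as [d [Hd Hclose]]; [lra|].
  exists (Rmin (L / 2) d). split; [apply Rmin_pos; lra|]. intros eps [He Hed].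
  pose proof (Rmin_l (L / 2) d). pose proof (Rmin_r (L / 2) d).
  destruct (continuity_gamma_eps eps He) as [Cx Cy].
  split; [split; [exact Cx|split; [exact Cy|]]|].
  - exists T. split; [exact T_pos|]. split; [apply gamma_eps_periodic, He|].
    apply (gamma_eps_injective K L m eps); [lra|exact Hmargin|exact Hsep|].
    intros s. pose proof (Hclose eps ltac:(lra) s). lra.
  - intros theta.
    destruct (KLG_margin_mollify K theta L eps He ltac:(lra) (Hmargin theta))
      as [v [a [b [Hp _]]]].
    exists v, a, b. exact Hp.
Qed.

Lemma muK_at_mollify_ge K theta v a b eps eta : 0 < eps ->
  (forall s, l1_dist (gamma_eps phi gamma eps s) (gamma s) <= eta / 3) ->
  (forall s t, Rabs (s - t) <= eps -> l1_dist (gamma s) (gamma t) < eta / 3) ->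
  KLG_pair gamma K theta v a b -> eta < mu_pair gamma theta v a b ->
  Rbar_le (mu_pair gamma theta v a b - eta) (muK_at (gamma_eps phi gamma eps) K theta).
Proof.
  intros He Hclose Hunif Hp Hmu.
  pose proof Hp as [Hv [Hab _]].
  set (g := g_v gamma v). set (g' := g_v (gamma_eps phi gamma eps) v).
  assert (Hg' : forall s, Rabs (g' s - g s) <= eta / 3).
  { intros s. eapply Rle_trans; [apply Rabs_dot_sub_le, Hv|apply Hclose]. }
  assert (Hg : forall s t, Rabs (s - t) <= eps -> Rabs (g s - g t) < eta / 3).
  { intros s t Hst. eapply Rle_lt_trans; [apply Rabs_dot_sub_le, Hv|apply Hunif, Hst]. }
  pose proof (Rmin_l (Rabs (g theta - g a)) (Rabs (g theta - g b))).
  pose proof (Rmin_r (Rabs (g theta - g a)) (Rabs (g theta - g b))).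
  unfold mu_pair in Hmu. fold g in Hmu.
  (* a and b are eps-far from theta because g varies by less than eta / 3 within eps *)
  assert (Htheta : a + eps < theta < b - eps).
  { split; apply Rnot_le_lt; intros Hc.
    - assert (Z : Rabs (g theta - g a) < eta / 3) by (apply Hg, Rabs_le; lra).
      pose proof (Rabs_pos (g theta - g a)). lra.
    - assert (Z : Rabs (g theta - g b) < eta / 3) by (apply Hg, Rabs_le; lra).
      pose proof (Rabs_pos (g theta - g b)). lra. }
  eapply Rbar_le_trans; [|apply muK_at_ge_pair, KLG_pair_mollify; eassumption].
  simpl. apply mu_pair_perturb; fold g g'.
  - pose proof (Hg' theta). pose proof (Hg' (a + eps)).
    pose proof (Hg (a + eps) a ltac:(apply Rabs_le; lra)).
    pose proof (Rdist_tri (g' (a + eps)) (g a) (g (a + eps))). unfold Rdist in *. lra.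
  - pose proof (Hg' theta). pose proof (Hg' (b - eps)).
    pose proof (Hg (b - eps) b ltac:(apply Rabs_le; lra)).
    pose proof (Rdist_tri (g' (b - eps)) (g b) (g (b - eps))). unfold Rdist in *. lra.
Qed.

Lemma liminf_muK_mollify_ge K L (r eta : R) : 0 < L ->
  (forall theta, KLG_margin gamma K theta L) -> 0 < eta -> Rbar_lt r (muK gamma K) ->
  Rbar_le (r - eta) (liminf_0plus (fun eps => muK (gamma_eps phi gamma eps) K)).
Proof.
  intros HL Hmargin Heta Hr.
  destruct (gamma_eps_close (eta / 3)) as [d0 [Hd0 Hclose]]; [lra|].
  destruct (curve_uniform_continuity (eta / 3)) as [d1 [Hd1 Hunif]]; [lra|].
  pose proof (Rmin_l L (Rmin d0 d1)). pose proof (Rmin_r L (Rmin d0 d1)).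
  pose proof (Rmin_l d0 d1). pose proof (Rmin_r d0 d1).
  apply (Rbar_sup_over_ge _ _ _ (Rmin L (Rmin d0 d1))); [repeat apply Rmin_pos; lra|].
  apply Rbar_inf_over_ge. intros eps [He Hed].
  apply Rbar_inf_over_ge. intros theta _.
  destruct (Rle_or_lt (r - eta) 0) as [Hneg|Hpos].
  - destruct (KLG_margin_mollify K theta L eps He ltac:(lra) (Hmargin theta))
      as [v [a [b [Hp _]]]].
    eapply Rbar_le_trans; [|apply muK_at_ge_pair, Hp].
    simpl. pose proof (mu_pair_ge0 (gamma_eps phi gamma eps) theta v a b). lra.
  - destruct (Lub_Rbar_gt _ _ (Rbar_inf_over_lt _ _ r theta Hr I))
      as [mu [[v [a [b [Hp ->]]]] Hrmu]].
    eapply Rbar_le_trans; [|apply (muK_at_mollify_ge K theta v a b eps eta)].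
    + simpl. lra.
    + exact He.
    + apply Hclose. lra.
    + intros s t Hst. apply Hunif. lra.
    + exact Hp.
    + lra.
Qed.

End Mollified.

End Curve.

Theorem lemma4p3 (gamma : R -> R * R) (K : R) (phi : R -> R) :
  jordan_curve gamma ->
  locally_KLG gamma K ->
  smooth phi ->
  (forall x, 0 <= phi x) ->
  (forall x, 1 < Rabs x -> phi x = 0) ->
  is_RInt_gen phi (Rbar_locally m_infty) (Rbar_locally p_infty) 1 ->
  (exists delta, 0 < delta /\
     forall eps, 0 < eps < delta ->
       jordan_curve (gamma_eps phi gamma eps) /\
       locally_KLG (gamma_eps phi gamma eps) K) /\
  Rbar_le (muK gamma K)
          (liminf_0plus (fun eps => muK (gamma_eps phi gamma eps) K)).
Proof.
  intros [Cx [Cy [T [HT [Hper Hinj]]]]] HK Hsmooth Hphi0 Hsupp Hint.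
  assert (Hphi : continuity phi).
  { intros x. apply continuity_pt_filterlim.
    apply (ex_derive_continuous (K := R_AbsRing) (V := R_NormedModule)), (Hsmooth 0%nat). }
  assert (Hmass := RInt_compact_support_mass phi Hphi Hsupp Hint).
  destruct (KLG_margin_uniform gamma T HT Hper K HK) as [L [HL Hmargin]].
  split.
  - apply (gamma_eps_jordan_KLG gamma T) with (L := L); assumption.
  - apply Rbar_le_of_approx. intros r eta Heta Hr.
    apply (liminf_muK_mollify_ge gamma T) with (L := L); assumption.
Qed.
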